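(* Let $A$ be a division algebra over the field $\mathbb{C}(q)$ ($q$ an indeterminate), let $\alpha:A\to A$ be an algebra isomorphism, and let $A(X)_\alpha$ be the associated skew rational function algebra. If a skew rational fraction $f(X)\in A(X)_\alpha$ satisfies $f(X)=f(q^2X)$, then $f(X)$ is constant, i.e. $f\in A$.
   Context: The skew polynomial algebra $A[X]_\alpha$ consists of formal polynomials $\sum a_iX^i$ with $a_i\in A$, multiplied using the rule $Xa=\alpha(a)X$; it satisfies the Ore condition and $A(X)_\alpha$ denotes its fraction division algebra, whose elements are rational fractions in $X$ with coefficients in $A$ multiplying according to $Xa=\alpha(a)X$. The scalar $q$ is central, and $f(q^2X)$ denotes the result of substituting $q^2X$ for $X$ in $f$. *)

From HB Require Import structures.
From mathcomp Require Import all_boot all_algebra fraction.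
From mathcomp Require Import reals complex.
Set Implicit Arguments. Unset Strict Implicit. Unset Printing Implicit Defensive.
Import GRing.Theory.
Local Open Scope ring_scope.

(* The field C(q): rational functions in the indeterminate q over
   C = R[i], R a real number field (realType; all are isomorphic to the reals). *)
Notation Cq R := {fraction {poly (R : realType)[i]}}.

Definition qind (R : realType) : Cq R := tofrac 'X.

Definition division_ring (D : unitRingType) : Prop :=
  forall x : D, x != 0 -> x \is a GRing.unit.

Definition skew_eval (A K : unitRingType) (iota : A -> K) (X : K) (s : seq A) : K :=
  \sum_(i < size s) iota s`_i * X ^+ i.

(* (K, iota, X) is the skew rational function algebra A(X)_alpha, i.e. the
   (Ore) division ring of fractions of A[X]_alpha:
   - K is a division ring,
   - X a = alpha(a) X  for a in A (via the embedding iota),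
   - A[X]_alpha embeds in K (the map sum a_i X^i |-> sum iota(a_i) X^i is injective),
   - every element of K is a fraction  P Q^{-1}  of skew polynomials. *)
Definition skew_rational_field (A K : unitRingType) (alpha : A -> A)
    (iota : A -> K) (X : K) : Prop :=
  [/\ division_ring K,
      (forall a : A, X * iota a = iota (alpha a) * X),
      (forall s : seq A, skew_eval iota X s = 0 -> all (fun a => a == 0) s) &
      (forall f : K, exists p r : seq A,
          skew_eval iota X r != 0 /\ f = skew_eval iota X p * (skew_eval iota X r)^-1)].

From HB Require Import structures.
From mathcomp Require Import all_boot all_algebra fraction.
From mathcomp Require Import reals complex.
Set Implicit Arguments. Unset Strict Implicit. Unset Printing Implicit Defensive.
Import GRing.Theory.
Local Open Scope ring_scope.

(* Write f = P Q^-1 with skew polynomials P, Q, so that f Q = P, and induct on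
   the length of Q.  If Q has degree d, the operator
   qdiff d : y |-> sigma y - y c^d  (with c = q^2)
   multiplies the coefficient of X^i by c^i - c^d.  Since sigma f = f, it
   commutes with left multiplication by f, so f (qdiff d Q) = qdiff d P, and
   qdiff d Q is shorter than Q.  If it vanishes, then, the powers of c being
   pairwise distinct, Q and P are both monomials of degree d, say Q = a X^d and
   P = b X^d, and f = b a^-1 lies in A. *)

Section FixedSkewFractions.

Variables (k : fieldType) (A : unitAlgType k) (K : unitRingType).
Variables (iota : {rmorphism A -> K}) (X : K).

Definition skew_sum n (g : nat -> A) : K := \sum_(i < n) iota (g i) * X ^+ i.

Lemma skew_sum0 g : skew_sum 0 g = 0.
Proof. by rewrite /skew_sum big_ord0. Qed.

Lemma skew_sumS n g : skew_sum n.+1 g = skew_sum n g + iota (g n) * X ^+ n.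
Proof. by rewrite /skew_sum big_ord_recr. Qed.

Lemma eq_skew_sum n g h :
  (forall i, (i < n)%N -> g i = h i) -> skew_sum n g = skew_sum n h.
Proof. by move=> eq_gh; apply: eq_bigr => i _; rewrite eq_gh. Qed.

Lemma skew_sumB n g h :
  skew_sum n g - skew_sum n h = skew_sum n (fun i => g i - h i).
Proof. by rewrite /skew_sum -sumrB; apply: eq_bigr => i _; rewrite rmorphB mulrBl. Qed.

Lemma skew_sum_mkseq n g : skew_sum n g = skew_eval iota X (mkseq g n).
Proof.
rewrite /skew_eval size_mkseq; apply: eq_skew_sum => i lt_in.
by rewrite nth_mkseq.
Qed.

Lemma skew_sum_monomial n g d :
    (forall i, (i < n)%N -> i != d -> g i = 0) ->
  skew_sum n g = iota (if (d < n)%N then g d else 0) * X ^+ d.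
Proof.
elim: n => [|n IHn] g_off_d; first by rewrite skew_sum0 rmorph0 mul0r.
rewrite skew_sumS IHn => [|i lt_in]; last exact/g_off_d/ltnW.
have [-> | ne_nd] := eqVneq n d; first by rewrite ltnn ltnSn rmorph0 mul0r add0r.
rewrite (g_off_d n) // rmorph0 mul0r addr0 ltnS (leq_eqVlt d) eq_sym.
by rewrite (negbTE ne_nd).
Qed.

Hypothesis skew_eval_inj :
  forall s : seq A, skew_eval iota X s = 0 -> all (fun a => a == 0) s.

Lemma skew_sum_eq0 n g : skew_sum n g = 0 -> forall i, (i < n)%N -> g i = 0.
Proof.
rewrite skew_sum_mkseq => /skew_eval_inj/allP g0 i lt_in.
by apply/eqP/g0; apply: map_f; rewrite mem_iota.
Qed.

Lemma skew_var_neq0 : X != 0.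
Proof.
apply/eqP => X0; have := skew_sum_eq0 (n := 2) (g := fun i => (i == 1%N)%:R).
rewrite /skew_sum !big_ord_recr big_ord0 /= X0 rmorph0 !mul0r mulr0 !addr0.
by move=> /(_ erefl 1%N isT) /eqP; rewrite oner_eq0.
Qed.

Hypothesis X_comm_scalar : forall a : k, GRing.comm X (iota a%:A).

Lemma skew_sum_mul_scalar n g (a : k) :
  skew_sum n g * iota a%:A = skew_sum n (fun i => a *: g i).
Proof.
rewrite /skew_sum mulr_suml; apply: eq_bigr => i _.
by rewrite -mulrA -(commrX i (commr_sym (X_comm_scalar a))) mulrA -rmorphM mulr_algr.
Qed.

Variables (c : k) (sigma : {rmorphism K -> K}).
Hypothesis sigma_iota : forall a : A, sigma (iota a) = iota a.
Hypothesis sigma_X : sigma X = iota c%:A * X.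

Lemma sigma_skew_sum n g :
  sigma (skew_sum n g) = skew_sum n (fun i => c ^+ i *: g i).
Proof.
rewrite rmorph_sum; apply: eq_bigr => i _.
rewrite rmorphM rmorphXn sigma_iota sigma_X exprMn_comm; last first.
  exact/commr_sym/X_comm_scalar.
by rewrite -rmorphXn exprZn expr1n mulrA -rmorphM mulr_algr.
Qed.

Definition qdiff d (y : K) := sigma y - y * iota (c ^+ d)%:A.

Lemma qdiff_skew_sum d n g :
  qdiff d (skew_sum n g) = skew_sum n (fun i => (c ^+ i - c ^+ d) *: g i).
Proof.
rewrite /qdiff sigma_skew_sum skew_sum_mul_scalar skew_sumB.
by apply: eq_skew_sum => i _; rewrite scalerBl.
Qed.

Lemma qdiff_mull d f y : sigma f = f -> qdiff d (f * y) = f * qdiff d y.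
Proof. by move=> sigma_f; rewrite /qdiff rmorphM sigma_f mulrBr mulrA. Qed.

Lemma qdiff_skew_sum_top d g : qdiff d (skew_sum d.+1 g) = qdiff d (skew_sum d g).
Proof. by rewrite !qdiff_skew_sum skew_sumS subrr scale0r rmorph0 mul0r addr0. Qed.

Hypothesis c_expr_inj : injective (fun n => c ^+ n).

Lemma qdiff_eq0 d n g :
    qdiff d (skew_sum n g) = 0 ->
  skew_sum n g = iota (if (d < n)%N then g d else 0) * X ^+ d.
Proof.
rewrite qdiff_skew_sum => /skew_sum_eq0 gc0; apply: skew_sum_monomial => i lt_in ne_id.
apply/eqP; have /eqP := gc0 i lt_in; rewrite scaler_eq0 subr_eq0 => /orP[/eqP cid|//].
by rewrite (c_expr_inj cid) eqxx in ne_id.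
Qed.

Hypotheses (divA : division_ring A) (divK : division_ring K).

Lemma fixed_monomial_ratio f a b d :
  a != 0 -> f * (iota a * X ^+ d) = iota b * X ^+ d -> f = iota (b / a).
Proof.
move=> a_neq0; rewrite mulrA => /(mulIr (unitrX d (divK skew_var_neq0))) fab.
by rewrite rmorphM rmorphV ?divA // -fab mulrK // rmorph_unit ?divA.
Qed.

Lemma fixed_mul_skew_sum f n g m h :
    sigma f = f -> skew_sum n g != 0 -> f * skew_sum n g = skew_sum m h ->
  exists a, f = iota a.
Proof.
move=> sigma_f; elim: n g m h => [|d IHd] g m h; first by rewrite skew_sum0 eqxx.
move=> Q_neq0 fQ; have qdiff_fQ := qdiff_mull d (skew_sum d.+1 g) sigma_f.
rewrite fQ qdiff_skew_sum_top !qdiff_skew_sum in qdiff_fQ.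
have [Q'0 | Q'_neq0] := eqVneq (skew_sum d (fun i => (c ^+ i - c ^+ d) *: g i)) 0.
- have Q_mono : skew_sum d.+1 g = iota (g d) * X ^+ d.
    by rewrite (@qdiff_eq0 d) ?ltnSn // qdiff_skew_sum_top qdiff_skew_sum.
  have P_mono := @qdiff_eq0 d m h.
  rewrite qdiff_skew_sum qdiff_fQ Q'0 mulr0 in P_mono.
  rewrite Q_mono P_mono // in fQ; exists ((if (d < m)%N then h d else 0) / g d).
  apply: fixed_monomial_ratio fQ; apply: contraNneq Q_neq0 => gd0.
  by rewrite Q_mono gd0 rmorph0 mul0r.
- exact: IHd Q'_neq0 (esym qdiff_fQ).
Qed.

Hypothesis skew_fraction : forall f : K, exists p r : seq A,
  skew_eval iota X r != 0 /\ f = skew_eval iota X p * (skew_eval iota X r)^-1.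

Lemma sigma_fixed_skew_fraction f : sigma f = f -> exists a, f = iota a.
Proof.
move=> sigma_f; have [p [r [r_neq0 f_pr]]] := skew_fraction f.
apply: (@fixed_mul_skew_sum f (size r) (nth 0 r) (size p) (nth 0 p) sigma_f r_neq0).
by rewrite f_pr mulrVK ?divK.
Qed.

End FixedSkewFractions.

Lemma qind_expr_inj (R : realType) : injective (fun n => qind R ^+ n).
Proof.
move=> i j /eqP; rewrite /qind -!rmorphXn tofrac_eq => /eqP XiXj.
by have := congr1 (fun p : {poly _} => size p) XiXj; rewrite /= !size_polyXn => -[].
Qed.

Theorem lemma5 (R : realType) (A : unitAlgType (Cq R))
    (alpha : {lrmorphism A -> A})
    (K : unitRingType) (iota : {rmorphism A -> K}) (X : K)
    (sigma : {rmorphism K -> K}) :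
  division_ring A ->
  bijective alpha ->
  skew_rational_field alpha iota X ->
  (* sigma is the substitution f(X) |-> f(q^2 X) *)
  (forall a : A, sigma (iota a) = iota a) ->
  sigma X = iota ((qind R ^+ 2)%:A) * X ->
  forall f : K, sigma f = f -> exists a : A, f = iota a.
Proof.
move=> divA _ [divK X_iota skew_eval_inj skew_fraction] sigma_iota sigma_X.
have X_comm_scalar (a : Cq R) : GRing.comm X (iota a%:A).
  by rewrite /GRing.comm X_iota rmorph_alg.
have q2_expr_inj : injective (fun n => qind R ^+ 2 ^+ n).
  by move=> i j; rewrite -!exprM => /qind_expr_inj /eqP; rewrite eqn_mul2l => /eqP.
exact: sigma_fixed_skew_fraction sigma_X q2_expr_inj divA divK skew_fraction.
Qed.
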